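(* Let $\nu\ge3$ be a square-free integer with $\nu\equiv2$ or $3\pmod 4$, and for $n\ge1$ let $P_n(t)=(t^2-\nu)^{\circ n}\in\mathbb{Z}[t]$ (the $n$-fold composition of $t^2-\nu$). Write $C_n$ for the constant term of $P_n$ and $D_n$ for the coefficient of $t^2$ in $P_n$. For an integer $k$, let $s(k)$ be the set of primes dividing $k$. Then for every $n\ge2$, $\bigcup_{1\le k\le n} s(C_k)= s(D_{n+1})$. *)

From mathcomp Require Import all_boot all_order all_algebra.
Set Implicit Arguments. Unset Strict Implicit. Unset Printing Implicit Defensive.
Import GRing.Theory Num.Theory.
Local Open Scope ring_scope.

Definition squarefree (z : int) : Prop :=
  forall p : nat, prime p -> ~ (p ^ 2 %| `|z|)%N.

Definition Piter (nu : int) (n : nat) : {poly int} :=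
  iter n (fun p => ('X ^+ 2 - nu%:P) \Po p) 'X.

Definition Ccoef (nu : int) (n : nat) : int := (Piter nu n)`_0.
Definition Dcoef (nu : int) (n : nat) : int := (Piter nu n)`_2.

Definition in_s (k : int) (p : nat) : Prop := prime p /\ (p %| `|k|)%N.

From mathcomp Require Import all_boot all_order all_algebra.
From mathcomp Require Import ring.
Import GRing.Theory Num.Theory.
Local Open Scope ring_scope.

(* Squaring a polynomial gives C_{n+1} = C_n^2 - nu, kills the t-coefficient
   from P_1 on (it is 2 C_n times the previous one, and C_0 = 0), and hence
   D_{n+2} = 2 C_{n+1} D_{n+1}, i.e. D_{n+1} = prod_{k=1}^n 2 C_k.  A prime
   divides this product iff it is 2 or divides some C_k, and 2 already divides
   C_2 = nu (nu - 1). *)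

Lemma coef1_sqr (R : comNzRingType) (p : {poly R}) :
  (p ^+ 2)`_1 = 2 * p`_0 * p`_1.
Proof. by rewrite expr2 coefM !big_ord_recr big_ord0 /=; ring. Qed.

Lemma coef2_sqr (R : comNzRingType) (p : {poly R}) :
  (p ^+ 2)`_2 = 2 * p`_0 * p`_2 + p`_1 ^+ 2.
Proof. by rewrite expr2 coefM !big_ord_recr big_ord0 /=; ring. Qed.

Lemma dvd2_mul_subr1 (z : int) : (2 %| `|(z * (z - 1))%R|)%N.
Proof.
rewrite abszM dvdn2 oddM negb_and.
case: z => [[|m]|m] //.
- by rewrite -[m.+1]addn1 PoszD addrK /= addn1 /=; case: (odd m).
- by rewrite NegzE -opprD !abszN -PoszD /= addn1 /=; case: (odd m).
Qed.

Section IteratedQuadratic.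

Variable nu : int.

Lemma Piter_succ n : Piter nu n.+1 = Piter nu n ^+ 2 - nu%:P.
Proof. by rewrite /Piter iterS comp_polyB comp_Xn_poly comp_polyC. Qed.

Lemma Ccoef0 : Ccoef nu 0 = 0.
Proof. by rewrite /Ccoef /Piter coefX. Qed.

Lemma Ccoef_succ n : Ccoef nu n.+1 = Ccoef nu n ^+ 2 - nu.
Proof. by rewrite /Ccoef Piter_succ coefB coefC coef0M expr2. Qed.

Lemma Ccoef2 : Ccoef nu 2 = nu * (nu - 1).
Proof. by rewrite !Ccoef_succ Ccoef0 expr0n /= sub0r sqrrN; ring. Qed.

Lemma coef1_Piter_succ n : (Piter nu n.+1)`_1 = 0.
Proof.
have coef1_succ m : (Piter nu m.+1)`_1 = 2 * Ccoef nu m * (Piter nu m)`_1.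
  by rewrite Piter_succ coefB coefC subr0 coef1_sqr.
elim: n => [|n IHn]; rewrite coef1_succ.
  by rewrite Ccoef0 mulr0 mul0r.
by rewrite IHn mulr0.
Qed.

Lemma Dcoef_succ n : Dcoef nu n.+1 = 2 * Ccoef nu n * Dcoef nu n + (Piter nu n)`_1 ^+ 2.
Proof. by rewrite /Dcoef Piter_succ coefB coefC subr0 coef2_sqr. Qed.

Lemma Dcoef_prod n : Dcoef nu n.+1 = \prod_(1 <= k < n.+1) (2 * Ccoef nu k).
Proof.
elim: n => [|n IHn].
  by rewrite Dcoef_succ Ccoef0 /Dcoef /Piter coefX coefX big_geq.
by rewrite Dcoef_succ coef1_Piter_succ expr0n addr0 big_nat_recr //= IHn mulrC.
Qed.

Lemma prime_dvd_Dcoef n p : prime p ->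
  (p %| `|Dcoef nu n.+1|)%N =
  has (fun k => (p == 2)%N || (p %| `|Ccoef nu k|)%N) (index_iota 1 n.+1).
Proof.
move=> p_pr; rewrite Dcoef_prod (big_morph absz abszM absz1) Euclid_dvd_prod //.
rewrite big_has; apply: eq_has => k /=.
by rewrite abszM Euclid_dvdM // dvdn_prime2.
Qed.

End IteratedQuadratic.

Theorem lemma4p5 (nu : int) (hnu3 : 3 <= nu) (hsf : squarefree nu)
  (hmod : ((nu %% 4)%Z = 2) \/ ((nu %% 4)%Z = 3))
  (n : nat) (hn : (2 <= n)%N) :
  forall p : nat,
    (exists k : nat, [/\ (1 <= k)%N, (k <= n)%N & in_s (Ccoef nu k) p])
    <-> in_s (Dcoef nu n.+1) p.
Proof.
move=> p; split.
  case=> k [k_ge1 k_le_n [p_pr p_dvd]]; split=> //.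
  rewrite prime_dvd_Dcoef //; apply/hasP; exists k; last by rewrite p_dvd orbT.
  by rewrite mem_index_iota k_ge1 ltnS.
case=> p_pr; rewrite prime_dvd_Dcoef // => /hasP[k].
rewrite mem_index_iota ltnS => /andP[k_ge1 k_le_n] /orP[/eqP-> | p_dvd].
  by exists 2%N; split=> //; split=> //; rewrite Ccoef2 dvd2_mul_subr1.
by exists k.
Qed.
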